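(* Let $m$ and $k$ be positive integers such that $m\ge k+3$ and $2m-1<R(m-k,3)$. Suppose that $F_v(2_r;r-k+1)\ge r+m$ for every integer $r\ge m-1$. Then $F_v(2_r;r-k+1)=r+m$ for every integer $r\ge m-1$.
   Context: All graphs are finite, simple and undirected. $\mathrm{cl}(G)$ is the clique number of $G$. $G\overset{v}{\to}(2_r)$ means that in every partition of $V(G)$ into $r$ pairwise disjoint parts some part contains an edge (equivalently $\chi(G)\ge r+1$). $H_v(2_r;q)$ is the set of graphs $G$ with $G\overset{v}{\to}(2_r)$ and $\mathrm{cl}(G)<q$; $F_v(2_r;q)=\min\{|V(G)|:G\in H_v(2_r;q)\}$. The Ramsey number $R(p,3)$ is the least $n$ such that every graph on at least $n$ vertices has a $p$-clique or an independent set of size $3$. *)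

From mathcomp Require Import all_boot.
Set Implicit Arguments. Unset Strict Implicit. Unset Printing Implicit Defensive.

Definition simple_graph (n : nat) (e : rel 'I_n) : Prop :=
  irreflexive e /\ symmetric e.

Definition is_clique (n : nat) (e : rel 'I_n) (S : {set 'I_n}) : Prop :=
  forall x y, x \in S -> y \in S -> x != y -> e x y.

Definition is_indep (n : nat) (e : rel 'I_n) (S : {set 'I_n}) : Prop :=
  forall x y, x \in S -> y \in S -> ~~ e x y.

Definition clique_lt (n : nat) (e : rel 'I_n) (q : nat) : Prop :=
  forall S, is_clique e S -> #|S| < q.

(* G -v-> (2_r) : in every partition of V(G) into r parts (given as a map
   c : V -> 'I_r, parts may be empty) some part contains an edge *)
Definition varrow2 (n : nat) (e : rel 'I_n) (r : nat) : Prop :=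
  forall c : 'I_n -> 'I_r, exists x y, e x y /\ c x = c y.

Definition in_Hv (n : nat) (e : rel 'I_n) (r q : nat) : Prop :=
  simple_graph e /\ varrow2 e r /\ clique_lt e q.

Definition Fv_ge (r q N : nat) : Prop :=
  forall (n : nat) (e : rel 'I_n), in_Hv e r q -> N <= n.

Definition Fv_eq (r q N : nat) : Prop :=
  (exists e : rel 'I_N, in_Hv e r q) /\ Fv_ge r q N.

Definition ramsey_p3 (p n : nat) : Prop :=
  forall (N : nat) (e : rel 'I_N), n <= N -> simple_graph e ->
    (exists S, is_clique e S /\ #|S| = p) \/ (exists S, is_indep e S /\ #|S| = 3).

(* a < R(p,3) : a is smaller than every n with the Ramsey property
   (equivalently, than the least such n) *)
Definition lt_ramsey_p3 (a p : nat) : Prop :=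
  forall n, ramsey_p3 p n -> a < n.

From mathcomp Require Import all_boot zify.
From Stdlib Require Import Classical.

(* By the Ramsey hypothesis  2m-1 < R(m-k,3)  there is a graph G0 on 2m-1
   vertices with no (m-k)-clique and no independent set of size 3.  For
   t = r+1-m, the complete join  G = K_t + G0  has t + (2m-1) = r+m vertices;
   its cliques have fewer than t + (m-k) = r-k+1 vertices; and it admits no
   proper r-colouring: the t clique vertices need t private colours, while
   every colour class of G0 has at most 2 vertices, so G0 alone needs at
   least m colours, and t + m = r+1 > r.  Hence G lies in H_v(2_r; r-k+1),
   which together with the assumed lower bound gives the equality. *)

Set Implicit Arguments.
Unset Strict Implicit.
Unset Printing Implicit Defensive.

Definition indep_lt (n : nat) (e : rel 'I_n) (q : nat) : Prop :=
  forall S, is_indep e S -> #|S| < q.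

Lemma subset_of_card (T : finType) (A : {set T}) (n : nat) :
  n <= #|A| -> exists B : {set T}, B \subset A /\ #|B| = n.
Proof.
case/card_geqP => s [uniq_s size_s sA]; exists [set x in s]; split.
  by apply/subsetP => x; rewrite inE; exact: sA.
by rewrite cardsE -size_s; apply/card_uniqP.
Qed.

(* Cliques are closed under subsets, so having no p-clique bounds cl by p. *)
Lemma clique_lt_of_none (n : nat) (e : rel 'I_n) (p : nat) :
  ~ (exists S, is_clique e S /\ #|S| = p) -> clique_lt e p.
Proof.
move=> no_clique S clS; rewrite ltnNge.
apply/negP => /subset_of_card [B [BS cardB]].
apply: no_clique; exists B; split=> // x y xB yB; apply: clS; exact: (subsetP BS).
Qed.

Lemma indep_lt_of_none (n : nat) (e : rel 'I_n) (q : nat) :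
  ~ (exists S, is_indep e S /\ #|S| = q) -> indep_lt e q.
Proof.
move=> no_indep S inS; rewrite ltnNge.
apply/negP => /subset_of_card [B [BS cardB]].
apply: no_indep; exists B; split=> // x y xB yB.
by apply: (inS x y); exact: (subsetP BS).
Qed.

Section InducedSubgraph.

Variables (a N : nat) (f : 'I_a -> 'I_N) (e : rel 'I_N).
Hypothesis f_inj : injective f.

Definition induced : rel 'I_a := fun x y => e (f x) (f y).

Lemma induced_simple : simple_graph e -> simple_graph induced.
Proof. by case=> irr sym; split=> [x|x y]; rewrite /induced ?irr // sym. Qed.

(* ... and f maps their cliques and independent sets injectively onto
   cliques and independent sets of e, so cl and alpha can only drop. *)
Lemma induced_clique_lt (p : nat) : clique_lt e p -> clique_lt induced p.
Proof.
move=> clE S clS; rewrite -(card_imset S f_inj); apply: clE.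
move=> _ _ /imsetP [x xS ->] /imsetP [y yS ->] fxy.
by apply: clS => //; apply: contraNneq fxy => ->.
Qed.

Lemma induced_indep_lt (q : nat) : indep_lt e q -> indep_lt induced q.
Proof.
move=> alphaE S inS; rewrite -(card_imset S f_inj); apply: alphaE.
by move=> _ _ /imsetP [x xS ->] /imsetP [y yS ->]; exact: inS.
Qed.

End InducedSubgraph.

(* a < R(p,3) yields a graph on exactly a vertices with cl < p and alpha < 3:
   some graph on N >= a vertices has neither, and so does any a-vertex
   induced subgraph of it. *)
Lemma ramsey_witness (a p : nat) :
  lt_ramsey_p3 a p ->
  exists e : rel 'I_a, [/\ simple_graph e, clique_lt e p & indep_lt e 3].
Proof.
move=> lt_ap; apply: NNPP => no_witness.
suff /lt_ap : ramsey_p3 p a by rewrite ltnn.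
move=> N e aN simple_e; apply: NNPP => /not_or_and [no_clique no_indep].
apply: no_witness; exists (induced (widen_ord aN) e).
have winj : injective (widen_ord aN) by move=> x y [] /val_inj.
split; first exact: induced_simple.
  by apply: induced_clique_lt => //; exact: clique_lt_of_none.
by apply: induced_indep_lt => //; exact: indep_lt_of_none.
Qed.

(* A proper colouring of a graph with alpha < q.+1 uses at least s/q colours,
   since each colour class is independent. *)
Lemma proper_colouring_bound (s q : nat) (e : rel 'I_s) (T : finType)
    (c : 'I_s -> T) :
  indep_lt e q.+1 -> (forall x y, e x y -> c x != c y) ->
  s <= q * #|c @: 'I_s|.
Proof.
move=> alpha_e proper_c.
have class_small j : #|[set x | c x == j]| <= q.
  apply: alpha_e => x y; rewrite !inE => /eqP cx /eqP cy.
  by apply/negP => /proper_c; rewrite cx cy eqxx.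
rewrite -[X in X <= _](card_ord s) -[X in X <= _]sum1_card.
rewrite (partition_big_imset c) /= mulnC -sum_nat_const.
by apply: leq_sum => j _; rewrite sum1_card -cardsE class_small.
Qed.

Section CompleteJoin.

(* The complete join K_t + G0: the first t vertices form a clique joined
   to every vertex of G0, which occupies the last s vertices. *)
Variables (t s : nat) (e0 : rel 'I_s).

Definition join : rel 'I_(t + s) := fun x y =>
  (x != y) && (if (split x, split y) is (inr a, inr b) then e0 a b else true).

Lemma join_rshift (a b : 'I_s) :
  join (rshift t a) (rshift t b) = (a != b) && e0 a b.
Proof. by rewrite /join !(unsplitK (inr _ _)) /= eq_rshift. Qed.

Lemma join_lshift (i : 'I_t) (y : 'I_(t + s)) :
  lshift s i != y -> join (lshift s i) y.
Proof. by rewrite /join (unsplitK (inl _ _)) => ->. Qed.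

Lemma join_simple : symmetric e0 -> simple_graph join.
Proof.
move=> sym0; split=> [x|x y]; first by rewrite /join eqxx.
rewrite /join eq_sym; case: (split x) => [i|a]; case: (split y) => //= b.
by rewrite sym0.
Qed.

(* A clique of the join meets K_t in at most t and G0 in a clique of G0. *)
Lemma join_clique_lt (p : nat) : clique_lt e0 p -> clique_lt join (t + p).
Proof.
move=> cl0 S clS.
set L := [set i | lshift s i \in S]; set R := [set b | @rshift t s b \in S].
have cover : S \subset lshift s @: L :|: @rshift t s @: R.
  apply/subsetP => x xS; rewrite inE.
  case: (split_ordP x) => [i|b] xE; rewrite xE in xS.
  - by rewrite xE imset_f // inE.
  - by rewrite xE imset_f ?orbT // inE.
have R_clique : is_clique e0 R.
  move=> a b; rewrite !inE => aS bS ab.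
  by have := clS _ _ aS bS; rewrite eq_rshift join_rshift ab => /(_ isT).
apply: leq_ltn_trans (subset_leq_card cover) _.
apply: leq_ltn_trans (leq_card_setU _ _) _.
rewrite !card_imset; [|exact: rshift_inj|exact: lshift_inj].
rewrite -addnS leq_add //; first by have := max_card L; rewrite card_ord.
exact: cl0.
Qed.

(* If alpha(G0) <= 2 and 2r < 2t + s, the join has no proper r-colouring:
   K_t takes t private colours and G0 needs at least s/2 further ones. *)
Lemma join_varrow2 (r : nat) :
  irreflexive e0 -> indep_lt e0 3 -> 2 * r < 2 * t + s -> varrow2 join r.
Proof.
move=> irr0 alpha0 small_r c; apply: NNPP => no_mono.
have proper x y : join x y -> c x != c y.
  by move=> xy; apply/eqP => cxy; apply: no_mono; exists x, y.
pose cL := c \o lshift s; pose cR := c \o @rshift t s.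
have cL_inj : injective cL.
  move=> i j /eqP; apply: contraTeq => ij.
  by apply: proper; apply: join_lshift; rewrite eq_lshift.
have disjoint_colours : cR @: 'I_s \subset ~: (cL @: 'I_t).
  apply/subsetP => _ /imsetP [b _ ->]; rewrite inE; apply/imsetP => -[i _ /eqP].
  by apply/negP; rewrite eq_sym; apply: proper; apply: join_lshift;
    rewrite eq_lrshift.
have cR_proper a b : e0 a b -> cR a != cR b.
  move=> ab; apply: proper; rewrite join_rshift ab andbT.
  by apply: contraTneq ab => ->; rewrite irr0.
have needed := proper_colouring_bound alpha0 cR_proper.
have available := subset_leq_card disjoint_colours.
have := cardsC (cL @: 'I_t); rewrite card_imset // !card_ord => total.
lia.
Qed.

End CompleteJoin.

Arguments join t {s} e0.

Theorem lemma2p3 (m k : nat) :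
  0 < m -> 0 < k -> k + 3 <= m ->
  lt_ramsey_p3 (2 * m - 1) (m - k) ->
  (forall r, m - 1 <= r -> Fv_ge r (r - k + 1) (r + m)) ->
  forall r, m - 1 <= r -> Fv_eq r (r - k + 1) (r + m).
Proof.
move=> m_gt0 _ km ramsey lower_bound r rm.
split; last exact: lower_bound.
have [e0 [[irr0 sym0] cl0 alpha0]] := ramsey_witness ramsey.
set t := r.+1 - m.
have -> : r + m = t + (2 * m - 1) by rewrite /t; lia.
exists (join t e0); split; [|split].
- exact: join_simple.
- by apply: join_varrow2 => //; rewrite /t; lia.
- move=> S /(join_clique_lt cl0) S_small.
  by apply: leq_trans S_small _; rewrite /t; lia.
Qed.
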